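(* Let $a>0$ with $2a/\sqrt{3}<\pi/2$, and let $(T,g_{hex})$ be the singular torus defined below. Then the systole of $(T,g_{hex})$ equals $\min\{4a,\ 2\pi\cos(2a/\sqrt{3})\}$.
   Context: Let $\Delta\subset\mathbb{R}^2$ be the hexagonal lattice generated by $(2a,0)$ and $(a,a\sqrt3)$ (its Voronoi cells are regular hexagons of inradius $a$ and circumradius $2a/\sqrt3$). On $\mathbb{R}^3$ with coordinates $(x,y,z)$ consider the continuous Riemannian metric $h=dx^2+dy^2+\cos^2\!\big(\mathrm{dist}((x,y),\Delta)\big)\,dz^2$, where $\mathrm{dist}$ is the Euclidean distance in $\mathbb{R}^2$. The length of a piecewise smooth curve $\gamma$ is $\int (h(\gamma',\gamma'))^{1/2}dt$. $(T,g_{hex})$ is the quotient of $(\mathbb{R}^3,h)$ by the group generated by the translations $T_1:(x,y,z)\mapsto(x+4a,y,z)$, $T_2:(x,y,z)\mapsto(x+2a,y+2a\sqrt3,z)$, $T_3:(x,y,z)\mapsto(x,y,z+2\pi)$; $h$ descends to a metric $g_{hex}$. The systole is the infimum of the lengths of non-contractible piecewise smooth closed curves. *)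

From Stdlib Require Import Reals ZArith.
From Coquelicot Require Import Coquelicot.
Open Scope R_scope.

Definition inDelta (a x y : R) : Prop :=
  exists m n : Z, x = IZR m * (2 * a) + IZR n * a /\ y = IZR n * (a * sqrt 3).

Definition distDelta (a x y : R) : R :=
  real (Glb_Rbar (fun d => exists u v : R, inDelta a u v /\
                     d = sqrt ((x - u) ^ 2 + (y - v) ^ 2))).

Definition smooth_on (f : R -> R) (s t : R) : Prop :=
  exists F : R -> R, (forall (k : nat) (u : R), ex_derive_n F k u) /\
    (forall u, s <= u <= t -> f u = F u).

Definition piecewise_smooth (gx gy gz : R -> R) : Prop :=
  exists (n : nat) (P : nat -> R),
    (1 <= n)%nat /\ P 0%nat = 0 /\ P n = 1 /\
    (forall i, (i < n)%nat -> P i < P (S i)) /\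
    (forall i, (i < n)%nat ->
       smooth_on gx (P i) (P (S i)) /\ smooth_on gy (P i) (P (S i)) /\
       smooth_on gz (P i) (P (S i))).

Definition h_speed (a : R) (x y : R) (dx dy dz : R) : R :=
  sqrt (dx ^ 2 + dy ^ 2 + (cos (distDelta a x y)) ^ 2 * dz ^ 2).

Definition h_length (a : R) (gx gy gz : R -> R) : R :=
  RInt (fun t => h_speed a (gx t) (gy t) (Derive gx t) (Derive gy t) (Derive gz t)) 0 1.

Definition inLambda (a vx vy vz : R) : Prop :=
  exists p q r : Z,
    vx = IZR p * (4 * a) + IZR q * (2 * a) /\
    vy = IZR q * (2 * a * sqrt 3) /\
    vz = IZR r * (2 * PI).

(* Non-contractible piecewise smooth closed curves in T = R^3 / Lambda,
   represented through their lifts gamma : [0,1] -> R^3: the curve is closed in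
   T iff gamma(1) - gamma(0) is in Lambda, and non-contractible iff moreover
   gamma(1) - gamma(0) <> 0 (T is a torus with universal cover R^3). *)
Definition noncontractible_loop (a : R) (gx gy gz : R -> R) : Prop :=
  piecewise_smooth gx gy gz /\
  inLambda a (gx 1 - gx 0) (gy 1 - gy 0) (gz 1 - gz 0) /\
  (gx 1 - gx 0, gy 1 - gy 0, gz 1 - gz 0) <> (0, 0, 0).

Definition systole_hex (a : R) : Rbar :=
  Glb_Rbar (fun L => exists gx gy gz : R -> R,
                noncontractible_loop a gx gy gz /\ L = h_length a gx gy gz).

From Stdlib Require Import Reals Rgeom Lra Lia Psatz ZArith.
From Coquelicot Require Import Coquelicot.
Open Scope R_scope.

(* Every point of the plane lies within the circumradius 2a/sqrt 3 of Delta, so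
   g_hex dominates the flat metric dx^2 + dy^2 + c^2 dz^2 with c = cos(2a/sqrt 3).
   Integrating along a lift the covector dual to its displacement (X, Y, Z) shows
   that a loop is at least as long as the flat norm of (X, Y, Z), and every nonzero
   deck translation has flat norm at least min(4a, 2 pi c).  Both values are
   realised in g_hex: by a horizontal segment along T1, and by a vertical circle
   over a vertex of the hexagons, where the distance to Delta is exactly
   2a/sqrt 3. *)

Lemma Glb_Rbar_attained (E : R -> Prop) (m : R) :
  E m -> (forall x, E x -> m <= x) -> Glb_Rbar E = Finite m.
Proof.
  intros Hm Hlb. destruct (Glb_Rbar_correct E) as [Hl Hg].
  apply Rbar_le_antisym; [apply Hl | apply Hg]; auto.
Qed.

Lemma Glb_Rbar_between (E : R -> Prop) (lo x0 : R) :
  E x0 -> (forall x, E x -> lo <= x) -> lo <= real (Glb_Rbar E) <= x0.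
Proof.
  intros Hx0 Hlb. destruct (Glb_Rbar_correct E) as [Hl Hg].
  assert (Hup := Hl x0 Hx0).
  assert (Hlo : Rbar_le lo (Glb_Rbar E)) by (apply Hg; intros x Hx; apply Hlb; auto).
  destruct (Glb_Rbar E); simpl in *; tauto.
Qed.

Lemma exists_Z_multiple_below (z p : R) : 0 < p -> exists k : Z, 0 <= z - IZR k * p < p.
Proof.
  intros Hp. exists (Int_part (z / p)).
  destruct (base_Int_part (z / p)) as [Hk1 Hk2].
  assert (Hz : z = z / p * p) by (field; lra).
  split; nra.
Qed.

Lemma sqrt_le_of_sq (q r : R) : 0 <= r -> q <= r ^ 2 -> sqrt q <= r.
Proof. intros Hr Hq. rewrite <- (sqrt_pow2 r Hr). apply sqrt_le_1_alt, Hq. Qed.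

Lemma sqrt3_sq : sqrt 3 * sqrt 3 = 3.
Proof. apply sqrt_sqrt; lra. Qed.

Lemma sqrt3_pos : 0 < sqrt 3.
Proof. apply sqrt_lt_R0; lra. Qed.

Lemma circumradius_sq (a : R) : 3 * (2 * a / sqrt 3) ^ 2 = 4 * a ^ 2.
Proof.
  assert (H := sqrt3_pos). unfold Rdiv.
  rewrite Rpow_mult_distr, pow_inv, pow2_sqrt by lra. field.
Qed.

Lemma circumradius_pos (a : R) : 0 < a -> 0 < 2 * a / sqrt 3.
Proof. intros Ha. apply Rdiv_lt_0_compat; [lra | apply sqrt3_pos]. Qed.

Lemma dist_euc_le_abs (x y x' y' : R) : dist_euc x y x' y' <= Rabs (x - x') + Rabs (y - y').
Proof.
  eapply Rle_trans; [apply (triangle x y x' y' x' y) |]. unfold dist_euc.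
  replace ((x - x') ² + (y - y) ²) with ((x - x') ²) by (unfold Rsqr; ring).
  replace ((x' - x') ² + (y - y') ²) with ((y - y') ²) by (unfold Rsqr; ring).
  rewrite !sqrt_Rsqr_abs. lra.
Qed.

Lemma Eisenstein_norm_pos (p q : Z) : (p, q) <> (0%Z, 0%Z) -> (1 <= p * p + p * q + q * q)%Z.
Proof.
  intros Hpq.
  destruct (Z.eq_dec p 0), (Z.eq_dec q 0); subst; try (exfalso; auto; fail); nia.
Qed.

(* The left side is N(m - 1/3, n - 1/3) - 1/3 for the norm form N above: the deep hole
   (1/3, 1/3) of the lattice is at N-distance at least 1/3 from every lattice point. *)
Lemma Eisenstein_vertex_gap (m n : Z) : (0 <= m * m + m * n + n * n - m - n)%Z.
Proof.
  pose proof (Z.square_nonneg (m + n - 1)).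
  destruct (Z.eq_dec m 0), (Z.eq_dec n 0); subst; try lia.
  all: assert (1 <= m * m + n * n)%Z by nia; nia.
Qed.

Section DistanceToDelta.

Variable a : R.

Lemma inDelta_origin : inDelta a 0 0.
Proof. exists 0%Z, 0%Z; split; simpl; ring. Qed.

Lemma distDelta_le_point (x y u v : R) :
  inDelta a u v -> distDelta a x y <= sqrt ((x - u) ^ 2 + (y - v) ^ 2).
Proof.
  intros Huv. unfold distDelta.
  apply (Glb_Rbar_between _ 0); [exists u, v; auto |].
  intros d [u' [v' [_ ->]]]. apply sqrt_pos.
Qed.

Lemma distDelta_ge (x y lo : R) :
  (forall u v, inDelta a u v -> lo <= sqrt ((x - u) ^ 2 + (y - v) ^ 2)) ->
  lo <= distDelta a x y.
Proof.
  intros Hlo. unfold distDelta.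
  apply (Glb_Rbar_between _ lo (sqrt ((x - 0) ^ 2 + (y - 0) ^ 2))).
  - exists 0, 0. split; [apply inDelta_origin | reflexivity].
  - intros d [u [v [Huv ->]]]. auto.
Qed.

Lemma distDelta_nonneg (x y : R) : 0 <= distDelta a x y.
Proof. apply distDelta_ge. intros; apply sqrt_pos. Qed.

Lemma distDelta_le_of_sq (x y u v r : R) :
  inDelta a u v -> 0 <= r -> (x - u) ^ 2 + (y - v) ^ 2 <= r ^ 2 -> distDelta a x y <= r.
Proof.
  intros Huv Hr Hq. eapply Rle_trans; [apply (distDelta_le_point _ _ u v Huv) |].
  apply sqrt_le_of_sq; auto.
Qed.

Lemma distDelta_lipschitz (x y x' y' : R) :
  distDelta a x y <= distDelta a x' y' + dist_euc x y x' y'.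
Proof.
  cut (distDelta a x y - dist_euc x y x' y' <= distDelta a x' y'); [lra |].
  apply distDelta_ge. intros u v Huv.
  assert (Hd := distDelta_le_point x y u v Huv).
  assert (Ht := triangle x y u v x' y').
  unfold dist_euc in *. rewrite !Rsqr_pow2 in *. lra.
Qed.

Lemma distDelta_continuous (p : R * R) :
  continuous (fun q : R * R => distDelta a (fst q) (snd q)) p.
Proof.
  apply filterlim_locally. intros eps.
  assert (He : 0 < eps / 2) by (destruct eps; simpl; lra).
  exists (mkposreal _ He). intros q [Hx Hy]. simpl in Hx, Hy.
  unfold ball in Hx, Hy |- *; simpl in *.
  unfold AbsRing_ball, abs, minus, plus, opp in *; simpl in *.
  assert (L1 := distDelta_lipschitz (fst q) (snd q) (fst p) (snd p)).
  assert (L2 := distDelta_lipschitz (fst p) (snd p) (fst q) (snd q)).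
  rewrite distance_symm in L2.
  assert (E := dist_euc_le_abs (fst q) (snd q) (fst p) (snd p)).
  unfold Rminus in *. apply Rabs_def1; lra.
Qed.

Hypothesis ha : 0 < a.

(* s + sqrt 3 t = 2a is the bisector of the origin and the lattice point (a, a sqrt 3). *)
Lemma disc_covers_kite (s t : R) :
  0 <= s <= a -> 0 <= t -> s + sqrt 3 * t <= 2 * a -> 3 * (s ^ 2 + t ^ 2) <= 4 * a ^ 2.
Proof.
  intros Hs Ht Hline. assert (Hr := sqrt3_pos). assert (Hr3 := sqrt3_sq).
  assert (H0 : 0 <= sqrt 3 * t) by nra.
  assert (Hsq : (sqrt 3 * t) * (sqrt 3 * t) <= (2 * a - s) * (2 * a - s)) by nra.
  replace ((sqrt 3 * t) * (sqrt 3 * t)) with ((sqrt 3 * sqrt 3) * (t * t)) in Hsq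
    by ring.
  rewrite Hr3 in Hsq.
  nra.
Qed.

(* [0, 2a] x [0, a sqrt 3] is a fundamental domain of Delta, covered by
   the discs of radius 2a/sqrt 3 about (0, 0), (2a, 0) and (a, a sqrt 3). *)
Lemma three_discs_cover_rectangle (s t : R) :
  0 <= s <= 2 * a -> 0 <= t <= a * sqrt 3 ->
  3 * (s ^ 2 + t ^ 2) <= 4 * a ^ 2 \/
  3 * ((s - 2 * a) ^ 2 + t ^ 2) <= 4 * a ^ 2 \/
  3 * ((s - a) ^ 2 + (t - a * sqrt 3) ^ 2) <= 4 * a ^ 2.
Proof.
  intros Hs Ht.
  assert (Hflip : sqrt 3 * - (t - a * sqrt 3) = 3 * a - sqrt 3 * t).
  { replace (3 * a) with (a * (sqrt 3 * sqrt 3)) by (rewrite sqrt3_sq; ring). ring. }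
  destruct (Rle_dec s a) as [Hsa | Hsa].
  - destruct (Rle_dec (s + sqrt 3 * t) (2 * a)) as [Hc | Hc].
    + left. apply disc_covers_kite; lra.
    + right; right. replace ((s - a) ^ 2 + (t - a * sqrt 3) ^ 2)
        with ((a - s) ^ 2 + (- (t - a * sqrt 3)) ^ 2) by ring.
      apply disc_covers_kite; lra.
  - destruct (Rle_dec ((2 * a - s) + sqrt 3 * t) (2 * a)) as [Hc | Hc].
    + right; left. replace ((s - 2 * a) ^ 2 + t ^ 2) with ((2 * a - s) ^ 2 + t ^ 2) by ring.
      apply disc_covers_kite; lra.
    + right; right. replace ((s - a) ^ 2 + (t - a * sqrt 3) ^ 2)
        with ((s - a) ^ 2 + (- (t - a * sqrt 3)) ^ 2) by ring.
      apply disc_covers_kite; lra.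
Qed.

Lemma distDelta_le_circumradius (x y : R) : distDelta a x y <= 2 * a / sqrt 3.
Proof.
  assert (Hr := sqrt3_pos).
  destruct (exists_Z_multiple_below y (a * sqrt 3)) as [n Hn]; [nra |].
  destruct (exists_Z_multiple_below (x - IZR n * a) (2 * a)) as [k Hk]; [lra |].
  set (s := x - IZR n * a - IZR k * (2 * a)) in Hk.
  set (t := y - IZR n * (a * sqrt 3)) in Hn.
  assert (HR := circumradius_sq a). assert (HR0 := circumradius_pos a ha).
  destruct (three_discs_cover_rectangle s t) as [C | [C | C]]; try lra.
  - apply (distDelta_le_of_sq _ _ (IZR k * (2 * a) + IZR n * a) (IZR n * (a * sqrt 3)));
      [exists k, n; auto | lra |].
    unfold s, t in C. lra.
  - apply (distDelta_le_of_sq _ _ (IZR (k + 1) * (2 * a) + IZR n * a) (IZR n * (a * sqrt 3)));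
      [exists (k + 1)%Z, n; auto | lra |].
    rewrite plus_IZR. unfold s, t in C. lra.
  - apply (distDelta_le_of_sq _ _ (IZR k * (2 * a) + IZR (n + 1) * a)
             (IZR (n + 1) * (a * sqrt 3))); [exists k, (n + 1)%Z; auto | lra |].
    rewrite plus_IZR. unfold s, t in C. lra.
Qed.

Lemma distDelta_hexagon_vertex : distDelta a a (a / sqrt 3) = 2 * a / sqrt 3.
Proof.
  apply Rle_antisym; [apply distDelta_le_circumradius |].
  apply distDelta_ge. intros u v [m [n [-> ->]]].
  assert (Hr := sqrt3_pos).
  assert (Hgap := Eisenstein_vertex_gap m n). apply IZR_le in Hgap.
  rewrite !minus_IZR, !plus_IZR, !mult_IZR in Hgap.
  assert (Hv : a / sqrt 3 = a * sqrt 3 / 3).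
  { field_simplify_eq; [rewrite pow2_sqrt |]; lra. }
  assert (HR := circumradius_sq a).
  rewrite <- (sqrt_pow2 (2 * a / sqrt 3)) by (apply Rlt_le, circumradius_pos, ha).
  apply sqrt_le_1_alt. rewrite Hv.
  replace (a * sqrt 3 / 3 - IZR n * (a * sqrt 3)) with ((a / 3 - IZR n * a) * sqrt 3) by field.
  rewrite Rpow_mult_distr, pow2_sqrt by lra.
  assert (0 <= a ^ 2 * (IZR m * IZR m + IZR m * IZR n + IZR n * IZR n - IZR m - IZR n))
    by (apply Rmult_le_pos; [apply pow2_ge_0 | lra]).
  nra.
Qed.

End DistanceToDelta.

Definition smooth (F : R -> R) : Prop := forall (k : nat) (u : R), ex_derive_n F k u.

Lemma smooth_continuous (F : R -> R) (u : R) : smooth F -> continuous F u.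
Proof. intros HF. exact (ex_derive_continuous F u (HF 1%nat u)). Qed.

Lemma smooth_continuous_Derive (F : R -> R) (u : R) : smooth F -> continuous (Derive F) u.
Proof. intros HF. exact (ex_derive_continuous (Derive F) u (HF 2%nat u)). Qed.

Lemma Derive_interior_agree (g F : R -> R) (s t u : R) :
  s < u < t -> (forall v, s <= v <= t -> g v = F v) -> Derive g u = Derive F u.
Proof.
  intros Hu Hg. apply Derive_ext_loc.
  assert (Hd : 0 < Rmin (u - s) (t - u)) by (apply Rmin_glb_lt; lra).
  exists (mkposreal _ Hd). intros v Hv. apply Hg.
  unfold ball in Hv; simpl in Hv. unfold AbsRing_ball, abs, minus, plus, opp in Hv; simpl in Hv.
  assert (H1 := Rmin_l (u - s) (t - u)). assert (H2 := Rmin_r (u - s) (t - u)).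
  apply Rabs_def2 in Hv. lra.
Qed.

Definition h_speed_along (a : R) (gx gy gz : R -> R) (t : R) : R :=
  h_speed a (gx t) (gy t) (Derive gx t) (Derive gy t) (Derive gz t).

Lemma h_speed_along_continuous (a : R) (Fx Fy Fz : R -> R) (u : R) :
  smooth Fx -> smooth Fy -> smooth Fz -> continuous (h_speed_along a Fx Fy Fz) u.
Proof.
  intros SX SY SZ. unfold h_speed_along, h_speed. apply continuous_sqrt_comp.
  assert (Cdist : continuous (fun t => distDelta a (Fx t) (Fy t)) u).
  { apply (continuous_comp_2 Fx Fy (distDelta a));
      [apply smooth_continuous | apply smooth_continuous | apply distDelta_continuous]; auto. }
  assert (Csq : forall f : R -> R, continuous f u -> continuous (fun t => f t ^ 2) u).
  { intros f Hf. apply (continuous_mult f (fun t => f t * 1)); auto.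
    apply (continuous_mult f (fun _ => 1)); auto. apply continuous_const. }
  apply (continuous_plus (fun t => Derive Fx t ^ 2 + Derive Fy t ^ 2)
           (fun t => cos (distDelta a (Fx t) (Fy t)) ^ 2 * Derive Fz t ^ 2)).
  - apply (continuous_plus (fun t => Derive Fx t ^ 2) (fun t => Derive Fy t ^ 2));
      apply Csq, smooth_continuous_Derive; auto.
  - apply (continuous_mult (fun t => cos (distDelta a (Fx t) (Fy t)) ^ 2)
             (fun t => Derive Fz t ^ 2)); apply Csq.
    + apply continuous_cos_comp, Cdist.
    + apply smooth_continuous_Derive; auto.
Qed.

Lemma covector_le_norm (c d px py pz u v w : R) :
  0 < c -> c <= d -> c ^ 2 * (px ^ 2 + py ^ 2) + pz ^ 2 <= c ^ 2 ->
  px * u + py * v + pz * w <= sqrt (u ^ 2 + v ^ 2 + d ^ 2 * w ^ 2).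
Proof.
  intros Hc Hcd Hp.
  set (P := px * u + py * v + pz * w).
  set (N := sqrt (u ^ 2 + v ^ 2 + c ^ 2 * w ^ 2)).
  assert (HN : 0 <= N) by apply sqrt_pos.
  assert (HN2 : N * N = u ^ 2 + v ^ 2 + c ^ 2 * w ^ 2) by (apply sqrt_sqrt; nra).
  assert (Hmono : N <= sqrt (u ^ 2 + v ^ 2 + d ^ 2 * w ^ 2)).
  { apply sqrt_le_1_alt. assert (c ^ 2 <= d ^ 2) by nra. nra. }
  (* Cauchy-Schwarz for (c px, c py, pz) and (u, v, c w), via Lagrange's identity *)
  assert (HCS : c ^ 2 * P ^ 2 <= c ^ 2 * (N * N)).
  { rewrite HN2. unfold P.
    assert (H1 := pow2_ge_0 (c * px * v - c * py * u)).
    assert (H2 := pow2_ge_0 (c * px * (c * w) - pz * u)).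
    assert (H3 := pow2_ge_0 (c * py * (c * w) - pz * v)).
    assert (0 <= u ^ 2 + v ^ 2 + c ^ 2 * w ^ 2) by nra.
    nra. }
  assert (HP : P ^ 2 <= N * N) by (apply (Rmult_le_reg_l (c ^ 2)); nra).
  fold P. nra.
Qed.

Lemma cos_circumradius_le (a x y : R) :
  0 < a -> 2 * a / sqrt 3 < PI / 2 ->
  0 < cos (2 * a / sqrt 3) <= cos (distDelta a x y).
Proof.
  intros Ha Hs. assert (H0 := circumradius_pos a Ha).
  assert (Hd0 := distDelta_nonneg a x y). assert (Hd := distDelta_le_circumradius a Ha x y).
  assert (HPI := PI2_RGT_0). split.
  - apply cos_gt_0; lra.
  - apply cos_decr_1; lra.
Qed.

Lemma covector_le_h_speed (a px py pz x y u v w : R) :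
  0 < a -> 2 * a / sqrt 3 < PI / 2 ->
  cos (2 * a / sqrt 3) ^ 2 * (px ^ 2 + py ^ 2) + pz ^ 2 <= cos (2 * a / sqrt 3) ^ 2 ->
  px * u + py * v + pz * w <= h_speed a x y u v w.
Proof.
  intros Ha Hs Hp. destruct (cos_circumradius_le a x y Ha Hs).
  apply (covector_le_norm (cos (2 * a / sqrt 3))); auto.
Qed.

Lemma RInt_ge_increment_partition (f phi : R -> R) (P : nat -> R) (n : nat) :
  (forall i, (i < n)%nat ->
     ex_RInt f (P i) (P (S i)) /\ phi (P (S i)) - phi (P i) <= RInt f (P i) (P (S i))) ->
  ex_RInt f (P 0%nat) (P n) /\ phi (P n) - phi (P 0%nat) <= RInt f (P 0%nat) (P n).
Proof.
  induction n as [| n IH]; intros Hpieces.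
  - split; [apply ex_RInt_point |]. rewrite RInt_point. unfold zero; simpl. lra.
  - destruct IH as [I1 B1]; [intros i Hi; apply Hpieces; lia |].
    destruct (Hpieces n (Nat.lt_succ_diag_r n)) as [I2 B2].
    split; [apply (ex_RInt_Chasles f _ (P n)); auto |].
    rewrite <- (RInt_Chasles f _ (P n)) by auto.
    change (plus ?x ?y) with (x + y). lra.
Qed.

Section Calibration.

Variables (a px py pz : R).
Hypotheses (ha : 0 < a) (hsmall : 2 * a / sqrt 3 < PI / 2)
  (hcov : cos (2 * a / sqrt 3) ^ 2 * (px ^ 2 + py ^ 2) + pz ^ 2 <= cos (2 * a / sqrt 3) ^ 2).

Lemma covector_increment_le_RInt_piece (gx gy gz Fx Fy Fz : R -> R) (s t : R) :
  s < t -> smooth Fx -> smooth Fy -> smooth Fz ->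
  (forall u, s <= u <= t -> gx u = Fx u) ->
  (forall u, s <= u <= t -> gy u = Fy u) ->
  (forall u, s <= u <= t -> gz u = Fz u) ->
  ex_RInt (h_speed_along a gx gy gz) s t /\
  (px * gx t + py * gy t + pz * gz t) - (px * gx s + py * gy s + pz * gz s)
    <= RInt (h_speed_along a gx gy gz) s t.
Proof.
  intros Hst SX SY SZ EX EY EZ.
  assert (Hmin : Rmin s t = s) by (apply Rmin_left; lra).
  assert (Hmax : Rmax s t = t) by (apply Rmax_right; lra).
  assert (Hagree : forall u, Rmin s t < u < Rmax s t ->
            h_speed_along a Fx Fy Fz u = h_speed_along a gx gy gz u).
  { rewrite Hmin, Hmax. intros u Hu. unfold h_speed_along.
    rewrite (EX u), (EY u), (Derive_interior_agree gx Fx s t u),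
      (Derive_interior_agree gy Fy s t u), (Derive_interior_agree gz Fz s t u); auto; lra. }
  assert (Hint : ex_RInt (h_speed_along a gx gy gz) s t).
  { apply (ex_RInt_ext _ _ _ _ Hagree), (ex_RInt_continuous (V := R_CompleteNormedModule)).
    intros; apply h_speed_along_continuous; auto. }
  split; [exact Hint |].
  set (phi := fun u => px * Fx u + py * Fy u + pz * Fz u).
  set (dphi := fun u => px * Derive Fx u + py * Derive Fy u + pz * Derive Fz u).
  assert (Hftc : is_RInt dphi s t (minus (phi t) (phi s))).
  { apply (is_RInt_derive (V := R_CompleteNormedModule)).
    - intros u _. unfold phi, dphi. auto_derive.
      + repeat split; apply (SX 1%nat) || apply (SY 1%nat) || apply (SZ 1%nat).
      + rewrite !Rmult_1_l. reflexivity.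
    - intros u _. unfold dphi.
      assert (Cterm : forall (k : R) (F : R -> R), smooth F ->
                continuous (fun v => k * Derive F v) u).
      { intros k F HF. apply (continuous_mult (fun _ => k) (Derive F));
          [apply continuous_const | apply smooth_continuous_Derive, HF]. }
      apply (continuous_plus (fun v => px * Derive Fx v + py * Derive Fy v)
               (fun v => pz * Derive Fz v));
        [apply (continuous_plus (fun v => px * Derive Fx v) (fun v => py * Derive Fy v)) |];
        apply Cterm; auto. }
  assert (Hle : RInt dphi s t <= RInt (h_speed_along a gx gy gz) s t).
  { apply RInt_le; [lra | eexists; exact Hftc | exact Hint |].
    intros u Hu. rewrite <- Hagree by (rewrite Hmin, Hmax; lra).
    apply covector_le_h_speed; auto. }
  rewrite (is_RInt_unique _ _ _ _ Hftc) in Hle.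
  unfold minus, plus, opp in Hle; simpl in Hle. unfold phi in Hle.
  rewrite (EX s), (EX t), (EY s), (EY t), (EZ s), (EZ t) by lra.
  lra.
Qed.

Lemma covector_increment_le_h_length (gx gy gz : R -> R) :
  piecewise_smooth gx gy gz ->
  px * (gx 1 - gx 0) + py * (gy 1 - gy 0) + pz * (gz 1 - gz 0) <= h_length a gx gy gz.
Proof.
  intros [n [P [_ [HP0 [HPn [Hinc Hsm]]]]]].
  destruct (RInt_ge_increment_partition (h_speed_along a gx gy gz)
              (fun u => px * gx u + py * gy u + pz * gz u) P n) as [_ B].
  - intros i Hi. destruct (Hsm i Hi) as [[Fx [SX EX]] [[Fy [SY EY]] [Fz [SZ EZ]]]].
    apply (covector_increment_le_RInt_piece _ _ _ Fx Fy Fz); auto.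
  - rewrite HP0, HPn in B. unfold h_length. fold (h_speed_along a gx gy gz). lra.
Qed.

End Calibration.

Lemma flat_norm_le_h_length (a : R) (gx gy gz : R -> R) :
  0 < a -> 2 * a / sqrt 3 < PI / 2 -> piecewise_smooth gx gy gz ->
  sqrt ((gx 1 - gx 0) ^ 2 + (gy 1 - gy 0) ^ 2 + cos (2 * a / sqrt 3) ^ 2 * (gz 1 - gz 0) ^ 2)
    <= h_length a gx gy gz.
Proof.
  intros Ha Hs Hpw.
  set (X := gx 1 - gx 0). set (Y := gy 1 - gy 0). set (Z := gz 1 - gz 0).
  set (c := cos (2 * a / sqrt 3)).
  set (S := X ^ 2 + Y ^ 2 + c ^ 2 * Z ^ 2).
  assert (HS : 0 <= S) by (unfold S; nra).
  destruct (Req_dec S 0) as [HS0 | HS0].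
  - rewrite HS0, sqrt_0.
    assert (H := covector_increment_le_h_length a 0 0 0 Ha Hs ltac:(nra) gx gy gz Hpw).
    lra.
  - set (L := sqrt S).
    assert (HL : 0 < L) by (apply sqrt_lt_R0; lra).
    assert (HL0 : L <> 0) by (apply Rgt_not_eq, HL).
    assert (HL2 : L * L = S) by (apply sqrt_sqrt; lra).
    (* the covector dual to (X, Y, Z) for the flat metric, of dual norm 1 *)
    assert (Hcov : c ^ 2 * ((X / L) ^ 2 + (Y / L) ^ 2) + (c ^ 2 * Z / L) ^ 2 = c ^ 2).
    { replace (c ^ 2 * ((X / L) ^ 2 + (Y / L) ^ 2) + (c ^ 2 * Z / L) ^ 2)
        with (c ^ 2 * S / (L * L)) by (unfold S; field; exact HL0).
      rewrite HL2. field. exact HS0. }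
    assert (H := covector_increment_le_h_length a (X / L) (Y / L) (c ^ 2 * Z / L) Ha Hs
                   (Req_le _ _ Hcov) gx gy gz Hpw).
    fold X Y Z in H.
    replace (X / L * X + Y / L * Y + c ^ 2 * Z / L * Z) with (L * L / L) in H
      by (rewrite HL2; unfold S; field; exact HL0).
    replace (L * L / L) with L in H by (field; exact HL0). exact H.
Qed.

Lemma Lambda_flat_norm_ge (a c X Y Z : R) :
  0 < a -> 0 <= c -> inLambda a X Y Z -> (X, Y, Z) <> (0, 0, 0) ->
  Rmin (4 * a) (2 * PI * c) <= sqrt (X ^ 2 + Y ^ 2 + c ^ 2 * Z ^ 2).
Proof.
  intros Ha Hc [p [q [r [EX [EY EZ]]]]] Hnz.
  assert (HPI := PI_RGT_0).
  assert (Hm0 : 0 <= Rmin (4 * a) (2 * PI * c)) by (apply Rmin_glb; nra).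
  rewrite <- (sqrt_pow2 _ Hm0). apply sqrt_le_1_alt.
  destruct (Z.eq_dec r 0) as [-> | Hr].
  - assert (HZ : Z = 0) by (rewrite EZ; ring). subst Z.
    assert (Hpq : (p, q) <> (0%Z, 0%Z)).
    { intros Hpq. injection Hpq as -> ->. apply Hnz. rewrite EX, EY. f_equal; [f_equal |]; ring. }
    assert (Hnorm := Eisenstein_norm_pos p q Hpq). apply IZR_le in Hnorm.
    rewrite !plus_IZR, !mult_IZR in Hnorm.
    assert (HY : Y ^ 2 = 12 * a ^ 2 * IZR q ^ 2).
    { rewrite EY, !Rpow_mult_distr, pow2_sqrt by lra. ring. }
    assert (Hm : Rmin (4 * a) (2 * PI * c) <= 4 * a) by apply Rmin_l.
    rewrite EX. nra.
  - assert (Hr1 : 1 <= IZR r ^ 2).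
    { destruct (Z_le_gt_dec r 0).
      - assert (IZR r <= -1) by (apply IZR_le; lia). nra.
      - assert (1 <= IZR r) by (apply IZR_le; lia). nra. }
    assert (Hm : Rmin (4 * a) (2 * PI * c) ^ 2 <= (2 * PI * c) ^ 2)
      by (apply pow_incr; split; [exact Hm0 | apply Rmin_r]).
    assert (HZ : (2 * PI * c) ^ 2 <= c ^ 2 * Z ^ 2).
    { rewrite EZ. replace (c ^ 2 * (IZR r * (2 * PI)) ^ 2) with ((2 * PI * c) ^ 2 * IZR r ^ 2)
        by ring.
      rewrite <- (Rmult_1_r ((2 * PI * c) ^ 2)) at 1.
      apply Rmult_le_compat_l; [apply pow2_ge_0 | exact Hr1]. }
    assert (0 <= X ^ 2 + Y ^ 2) by nra.
    lra.
Qed.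

Definition affine (x0 s : R) : R -> R := fun t => x0 + s * t.

Lemma affine_smooth (x0 s : R) : smooth (affine x0 s).
Proof.
  intros k u. apply (ex_derive_n_ext (fun t => x0 + s * t ^ 1)); [intros t; unfold affine; ring |].
  apply ex_derive_n_plus; apply filter_forall; intros.
  - apply ex_derive_n_const.
  - apply ex_derive_n_scal_l, ex_derive_n_pow.
Qed.

Lemma Derive_affine (x0 s u : R) : Derive (affine x0 s) u = s.
Proof. apply is_derive_unique. unfold affine. auto_derive; auto; ring. Qed.

Lemma affine_noncontractible_loop (a x0 y0 z0 sx sy sz : R) :
  inLambda a sx sy sz -> (sx, sy, sz) <> (0, 0, 0) ->
  noncontractible_loop a (affine x0 sx) (affine y0 sy) (affine z0 sz).
Proof.
  intros HL Hnz.
  assert (Hinc : forall x0 s, affine x0 s 1 - affine x0 s 0 = s) by (intros; unfold affine; ring).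
  split; [| rewrite !Hinc; auto].
  exists 1%nat, INR. do 3 (split; [reflexivity || lia |]). split.
  - intros i Hi. replace i with 0%nat by lia. simpl. lra.
  - intros i _. split; [| split]; eexists; (split; [apply affine_smooth | reflexivity]).
Qed.

Lemma h_length_affine (a x0 y0 z0 sx sy sz V : R) :
  (forall t, h_speed a (affine x0 sx t) (affine y0 sy t) sx sy sz = V) ->
  h_length a (affine x0 sx) (affine y0 sy) (affine z0 sz) = V.
Proof.
  intros HV. unfold h_length. rewrite (RInt_ext _ (fun _ => V)).
  - rewrite RInt_const. unfold scal; simpl. unfold mult; simpl. ring.
  - intros t _. rewrite !Derive_affine. apply HV.
Qed.

Lemma h_length_horizontal_segment (a : R) :
  0 < a -> h_length a (affine 0 (4 * a)) (affine 0 0) (affine 0 0) = 4 * a.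
Proof.
  intros Ha. apply h_length_affine. intros t. unfold h_speed.
  replace ((4 * a) ^ 2 + 0 ^ 2 + cos (distDelta a (affine 0 (4 * a) t) (affine 0 0 t)) ^ 2 * 0 ^ 2)
    with ((4 * a) ^ 2) by ring.
  apply sqrt_pow2. lra.
Qed.

Lemma h_length_vertex_circle (a : R) :
  0 < a -> 2 * a / sqrt 3 < PI / 2 ->
  h_length a (affine a 0) (affine (a / sqrt 3) 0) (affine 0 (2 * PI))
    = 2 * PI * cos (2 * a / sqrt 3).
Proof.
  intros Ha Hs. destruct (cos_circumradius_le a 0 0 Ha Hs) as [Hc _].
  assert (HPI := PI_RGT_0).
  apply h_length_affine. intros t. unfold h_speed, affine.
  rewrite !Rmult_0_l, !Rplus_0_r, distDelta_hexagon_vertex by exact Ha.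
  replace (0 ^ 2 + 0 ^ 2 + cos (2 * a / sqrt 3) ^ 2 * (2 * PI) ^ 2)
    with ((2 * PI * cos (2 * a / sqrt 3)) ^ 2) by ring.
  apply sqrt_pow2. nra.
Qed.

Theorem mainTheorem3 (a : R) (ha : 0 < a) (hsmall : 2 * a / sqrt 3 < PI / 2) :
  systole_hex a = Finite (Rmin (4 * a) (2 * PI * cos (2 * a / sqrt 3))).
Proof.
  destruct (cos_circumradius_le a 0 0 ha hsmall) as [Hc _].
  assert (HPI := PI_RGT_0).
  apply Glb_Rbar_attained.
  - destruct (Rle_dec (4 * a) (2 * PI * cos (2 * a / sqrt 3))) as [E | E];
      [rewrite Rmin_left by lra | rewrite Rmin_right by lra].
    + exists (affine 0 (4 * a)), (affine 0 0), (affine 0 0). split.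
      * apply affine_noncontractible_loop; [exists 1%Z, 0%Z, 0%Z; simpl; repeat split; ring |].
        intros H; inversion H; lra.
      * symmetry. apply h_length_horizontal_segment, ha.
    + exists (affine a 0), (affine (a / sqrt 3) 0), (affine 0 (2 * PI)). split.
      * apply affine_noncontractible_loop; [exists 0%Z, 0%Z, 1%Z; simpl; repeat split; ring |].
        intros H; inversion H; lra.
      * symmetry. apply h_length_vertex_circle; auto.
  - intros L [gx [gy [gz [[Hpw [HL Hnz]] ->]]]].
    eapply Rle_trans; [apply Lambda_flat_norm_ge; eauto; lra |].
    apply flat_norm_le_h_length; auto.
Qed.
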